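(* For every $\alpha\in\{1,\dots,r+1\}$ and every $n\in\mathbb Z$, $$R_{\alpha,n}=\det_{1\le i,j\le \alpha}\bigl(R_{1,\,n+i+j-1-\alpha}\bigr).$$ In particular, since $R_{r+1,n}=1$, one has $\det_{1\le i,j\le r+1}(R_{1,n+i+j-r-2})=1$ for all $n\in\mathbb Z$.
   Context: Fix an integer $r\ge1$ and let $I_r=\{1,\dots,r\}$. Let $R_{1,0},\dots,R_{r,0},R_{1,1},\dots,R_{r,1}$ be $2r$ algebraically independent indeterminates over $\mathbb Q$. The (renormalized) $A_r$ $Q$-system is the unique family $(R_{\alpha,n})_{0\le\alpha\le r+1,\ n\in\mathbb Z}$ of nonzero elements of the field $\mathbb Q(R_{1,0},\dots,R_{r,1})$ with these initial values, $R_{0,n}=R_{r+1,n}=1$ for all $n$, and $$R_{\alpha,n+1}R_{\alpha,n-1}=R_{\alpha,n}^2+R_{\alpha+1,n}R_{\alpha-1,n}\qquad(\alpha\in I_r,\ n\in\mathbb Z),$$ the relation being solved forward and backward in $n$. *)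

From HB Require Import structures.
From mathcomp Require Import all_boot all_order all_algebra.
From mathcomp Require Import fraction.
Set Implicit Arguments. Unset Strict Implicit. Unset Printing Implicit Defensive.
Import Order.TTheory GRing.Theory Num.Theory.
Local Open Scope ring_scope.

(* mpoly m = Q[x_0, ..., x_{m-1}] built as iterated univariate polynomials. *)
Fixpoint mpoly (m : nat) : idomainType :=
  match m with
  | 0 => rat
  | m'.+1 => ({poly mpoly m'} : idomainType)
  end.

(* mvar m k = the k-th indeterminate x_k of mpoly m (for k < m). *)
Fixpoint mvar (m k : nat) : mpoly m :=
  match m return mpoly m with
  | 0 => 0
  | m'.+1 => if k == m' then ('X : {poly mpoly m'}) else (mvar m' k)%:P
  end.

Definition Qfield (r : nat) : fieldType := {fraction mpoly (2 * r)}.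

Definition qvar (r k : nat) : Qfield r := @FracField.tofrac (mpoly (2 * r)) (mvar (2 * r) k).

Definition is_Qsystem (r : nat) (R : nat -> int -> Qfield r) : Prop :=
  [/\ (forall a : nat, (1 <= a <= r)%N -> R a 0%Z = qvar r a.-1),
      (forall a : nat, (1 <= a <= r)%N -> R a 1%Z = qvar r (r + a.-1)),
      (forall n : int, R 0%N n = 1 /\ R r.+1 n = 1),
      (forall a : nat, forall n : int, (a <= r.+1)%N -> R a n != 0) &
      (forall a : nat, forall n : int, (1 <= a <= r)%N ->
          R a (n + 1) * R a (n - 1) = R a n ^+ 2 + R a.+1 n * R a.-1 n)].

From HB Require Import structures.
From mathcomp Require Import all_boot all_order all_algebra.
From mathcomp Require Import fraction.
From mathcomp Require Import perm ring zify.
Import Order.TTheory GRing.Theory Num.Theory.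
Local Open Scope ring_scope.
Set Implicit Arguments. Unset Strict Implicit.

(* The proof is the classical one: Hankel determinants of the sequence
   n |-> R_{1,n} satisfy the same three-term relation as the Q-system,
   which is an instance of the Desnanot-Jacobi (Lewis Carroll) identity. *)

Section Determinants.
Variable K : comUnitRingType.

Definition fdet (N : nat) (f : nat -> nat -> K) : K :=
  \det (\matrix_(i < N, j < N) f i j).

Lemma fdet_ext N f g :
  (forall i j, (i < N)%N -> (j < N)%N -> f i j = g i j) -> fdet N f = fdet N g.
Proof.
move=> fg; rewrite /fdet; congr (\det _); apply/matrixP => i j; rewrite !mxE.
exact: fg.
Qed.

Lemma det2 (M : 'M[K]_2) : \det M = M 0 0 * M 1 1 - M 0 1 * M 1 0.
Proof.
rewrite (expand_det_row _ 0) !big_ord_recl big_ord0 addr0 /cofactor !det_mx11 /=.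
rewrite !mxE /= expr0 mul1r expr1 mulN1r mulrN.
by congr (_ * M _ _ - M _ _ * M _ _); apply: val_inj.
Qed.

Lemma det_schur m n (A : 'M[K]_m) B C (D : 'M_n) : A \in unitmx ->
  \det (block_mx A B C D) = \det A * \det (D - C *m invmx A *m B).
Proof.
move=> A_unit.
have -> : block_mx A B C D = block_mx A 0 C 1%:M *m
    block_mx 1%:M (invmx A *m B) 0 (D - C *m invmx A *m B).
  rewrite mulmx_block !mulmx0 !mul0mx !mulmx1 !addr0 mul1mx mulmxA.
  by rewrite mulmxV // mul1mx !mulmxA addrC subrK.
by rewrite det_mulmx det_lblock det_ublock !det1 mulr1 mul1r.
Qed.

Definition border (k : nat) (e : nat -> nat) (t : nat) : nat :=
  if (t < k)%N then t.+1 else e (t - k)%N.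

Lemma border_block k m n (f : nat -> nat -> K) (e e' : nat -> nat) :
  \matrix_(i < k + m, j < k + n) f (border k e i) (border k e' j) =
  block_mx (\matrix_(i < k, j < k) f i.+1 j.+1) (\matrix_(i < k, j < n) f i.+1 (e' j))
           (\matrix_(i < m, j < k) f (e i) j.+1) (\matrix_(i < m, j < n) f (e i) (e' j)).
Proof.
apply/matrixP => i j; rewrite !mxE /border.
case: splitP => i' -> /=; rewrite !mxE; case: splitP => j' -> /=;
  by rewrite !mxE ?ltn_ord ?ltnNge ?leq_addr ?addKn.
Qed.

Definition schur_entry k (f : nat -> nat -> K) (x y : nat) : K :=
  f x y - (\row_(j < k) f x j.+1 *m invmx (\matrix_(i < k, j < k) f i.+1 j.+1)
            *m \col_(i < k) f i.+1 y) 0 0.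

Lemma det_border k m (f : nat -> nat -> K) (e e' : nat -> nat) :
  fdet k (fun i j => f i.+1 j.+1) \is a GRing.unit ->
  fdet (k + m) (fun i j => f (border k e i) (border k e' j)) =
  fdet k (fun i j => f i.+1 j.+1) *
  \det (\matrix_(i < m, j < m) schur_entry k f (e i) (e' j)).
Proof.
move=> inner_unit; rewrite /fdet border_block det_schur ?unitmxE //.
congr (_ * \det _); apply/matrixP => i j; rewrite !mxE; congr (_ - _).
rewrite !mxE; apply: eq_bigr => l _; rewrite !mxE; congr (_ * _).
by apply: eq_bigr => l' _; rewrite !mxE.
Qed.

Definition pick2 (a b t : nat) : nat := if t == 0%N then a else b.

(* Sylvester's identity for 2 x 2 borderings of an invertible interior block:
   both sides equal det(S)^2 times the 2 x 2 Schur complement determinant. *)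
Lemma sylvester2 k (f : nat -> nat -> K) (x0 x1 y0 y1 : nat) :
  let minor x y := fdet (k + 1) (fun i j => f (border k (fun=> x) i) (border k (fun=> y) j)) in
  fdet k (fun i j => f i.+1 j.+1) \is a GRing.unit ->
  fdet (k + 2) (fun i j => f (border k (pick2 x0 x1) i) (border k (pick2 y0 y1) j))
    * fdet k (fun i j => f i.+1 j.+1)
  = minor x0 y0 * minor x1 y1 - minor x0 y1 * minor x1 y0.
Proof.
move=> minor inner_unit; rewrite /minor !det_border // det2 !det_mx11 !mxE /pick2 /=.
ring.
Qed.

Lemma perm_of_map N (s : nat -> nat) :
  (forall t, (t < N)%N -> (s t < N)%N) ->
  (forall t u, (t < N)%N -> (u < N)%N -> s t = s u -> t = u) ->
  exists p : 'S_N, forall i : 'I_N, val (p i) = s i.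
Proof.
move=> s_bound s_inj.
pose g (i : 'I_N) : 'I_N := Ordinal (s_bound _ (ltn_ord i)).
have g_inj : injective g.
  by move=> i j /(congr1 val) /= /s_inj eq_ij; apply: val_inj; apply: eq_ij.
by exists (perm g_inj) => i; rewrite permE.
Qed.

Lemma fdet_perm_rows N f (p : 'S_N) (s : nat -> nat) :
  (forall i : 'I_N, val (p i) = s i) ->
  fdet N (fun i j => f (s i) j) = (-1) ^+ p * fdet N f.
Proof.
move=> ps; rewrite /fdet -det_perm -det_mulmx -row_permE; congr (\det _).
by apply/matrixP => i j; rewrite !mxE ps.
Qed.

Lemma fdet_perm_cols N f (p : 'S_N) (s : nat -> nat) :
  (forall i : 'I_N, val (p i) = s i) ->
  fdet N (fun i j => f i (s j)) = (-1) ^+ p * fdet N f.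
Proof.
move=> ps; rewrite /fdet -odd_permV -det_perm mulrC -det_mulmx -col_permE.
by congr (\det _); apply/matrixP => i j; rewrite !mxE ps.
Qed.

Lemma fdet_perm N f (p : 'S_N) (s : nat -> nat) :
  (forall i : 'I_N, val (p i) = s i) ->
  fdet N (fun i j => f (s i) (s j)) = fdet N f.
Proof.
move=> ps; rewrite (fdet_perm_rows (fun i j => f i (s j)) ps).
by rewrite (fdet_perm_cols _ ps) mulrA -expr2 sqrr_sign mul1r.
Qed.

Lemma border_perm k m (e : nat -> nat) : (0 < m)%N ->
  (forall t, (t < m)%N -> (e t < k + m)%N /\ ~~ (0 < e t <= k)%N) ->
  (forall t u, (t < m)%N -> (u < m)%N -> e t = e u -> t = u) ->
  exists p : 'S_(k + m), forall i, val (p i) = border k e i.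
Proof.
move=> m_gt0 e_range e_inj.
apply: perm_of_map => [t lt_t | t u lt_t lt_u]; rewrite /border.
  by case: (ltnP t k) => kt /=; [lia | have := e_range (t - k)%N; lia].
case: (ltnP t k) => kt; case: (ltnP u k) => ku /=.
- by case.
- by have := e_range (u - k)%N; lia.
- by have := e_range (t - k)%N; lia.
- by move=> /e_inj; lia.
Qed.

(* Desnanot-Jacobi identity: removing the first and/or last rows and columns.
   It is sylvester2 with border indices 0 and k+1, after reordering. *)
Lemma desnanot_jacobi k (f : nat -> nat -> K) :
  fdet k (fun i j => f i.+1 j.+1) \is a GRing.unit ->
  fdet k.+2 f * fdet k (fun i j => f i.+1 j.+1) =
  fdet k.+1 (fun i j => f i.+1 j.+1) * fdet k.+1 f
  - fdet k.+1 (fun i j => f i.+1 j) * fdet k.+1 (fun i j => f i j.+1).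
Proof.
move=> inner_unit.
have [p2 p2E] : exists p : 'S_(k + 2), forall i, val (p i) = border k (pick2 0 k.+1) i.
  apply: border_perm => // [t|t u]; rewrite /pick2.
    by case: (t =P 0%N); lia.
  by case: (t =P 0%N); case: (u =P 0%N); lia.
have [p1 p1E] : exists p : 'S_(k + 1), forall i, val (p i) = border k (fun=> 0%N) i.
  by apply: border_perm => // [t|t u]; lia.
have border_top : forall t, (t < k + 1)%N -> border k (fun=> k.+1) t = t.+1.
  by move=> t lt_t; rewrite /border; case: (ltnP t k) => /= kt; lia.
have := @sylvester2 k f 0 k.+1 0 k.+1 inner_unit; rewrite /= (fdet_perm _ p2E).
rewrite (fdet_perm _ p1E).
have -> : fdet (k + 1) (fun i j => f (border k (fun=> k.+1) i) (border k (fun=> k.+1) j))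
    = fdet (k + 1) (fun i j => f i.+1 j.+1).
  by apply: fdet_ext => i j /border_top -> /border_top ->.
have -> : fdet (k + 1) (fun i j => f (border k (fun=> 0%N) i) (border k (fun=> k.+1) j))
    = (-1) ^+ p1 * fdet (k + 1) (fun i j => f i j.+1).
  by rewrite -(fdet_perm_rows _ p1E); apply: fdet_ext => i j _ /border_top ->.
have -> : fdet (k + 1) (fun i j => f (border k (fun=> k.+1) i) (border k (fun=> 0%N) j))
    = (-1) ^+ p1 * fdet (k + 1) (fun i j => f i.+1 j).
  by rewrite -(fdet_perm_cols _ p1E); apply: fdet_ext => i j /border_top ->.
rewrite mulrACA -expr2 sqrr_sign mul1r !addn1 addn2 => ->.
by rewrite mulrC (mulrC (fdet _ (fun i j => f i j.+1))).
Qed.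

(* The a x a Hankel determinant H_a(n) = det (c (n + i + j + 1 - a))_{0<=i,j<a},
   written with 1-based indices i.+1, j.+1 as in the statement. *)
Definition hankel (c : int -> K) (a : nat) (n : int) : K :=
  fdet a (fun i j => c (n + (i.+1 + j.+1)%N%:Z - 1 - a%:Z)).

(* Hankel determinants satisfy the Q-system relation (Desnanot-Jacobi applied
   to the (a+2) x (a+2) Hankel matrix). *)
Lemma hankel_recurrence (c : int -> K) (a : nat) (n : int) :
  hankel c a n \is a GRing.unit ->
  hankel c a.+2 n * hankel c a n =
  hankel c a.+1 (n + 1) * hankel c a.+1 (n - 1) - hankel c a.+1 n ^+ 2.
Proof.
pose f i j := c (n + (i.+1 + j.+1)%N%:Z - 1 - a.+2%:Z).
have inner : fdet a (fun i j => f i.+1 j.+1) = hankel c a n.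
  by apply: fdet_ext => i j _ _; congr c; lia.
have corner : fdet a.+1 (fun i j => f i.+1 j.+1) = hankel c a.+1 (n + 1).
  by apply: fdet_ext => i j _ _; congr c; lia.
have top : fdet a.+1 f = hankel c a.+1 (n - 1).
  by apply: fdet_ext => i j _ _; rewrite /f; congr c; lia.
have side_r : fdet a.+1 (fun i j => f i.+1 j) = hankel c a.+1 n.
  by apply: fdet_ext => i j _ _; rewrite /f; congr c; lia.
have side_c : fdet a.+1 (fun i j => f i j.+1) = hankel c a.+1 n.
  by apply: fdet_ext => i j _ _; congr c; lia.
rewrite -inner => /desnanot_jacobi ->.
by rewrite corner top side_r side_c expr2.
Qed.
End Determinants.

Lemma qsystem_hankel (r : nat) (R : nat -> int -> Qfield r) :
  is_Qsystem R ->
  forall (a : nat) (n : int), (a <= r.+1)%N -> R a n = hankel (R 1%N) a n.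
Proof.
case=> _ _ boundary nonzero recursion.
suff two_step a : (a <= r)%N ->
    (forall n, R a n = hankel (R 1%N) a n) /\ (forall n, R a.+1 n = hankel (R 1%N) a.+1 n).
  move=> [|a] n a_le; first by case: (two_step 0%N isT) => ->.
  by case: (two_step a a_le) => _ ->.
elim: a => [_ | a IH a_lt]; split => n.
- by rewrite /hankel /fdet det_mx00; case: (boundary n).
- by rewrite /hankel /fdet det_mx11 mxE /=; congr R; lia.
- by case: (IH (ltnW a_lt)) => _ ->.
have [IH0 IH1] := IH (ltnW a_lt).
have R_a_nz : R a n != 0 by apply: nonzero; lia.
have := @hankel_recurrence _ (R 1%N) a n; rewrite -!IH1 -IH0 unitfE => /(_ R_a_nz).
rewrite recursion ?a_lt // => hankel_eq.
by apply: (mulIf R_a_nz); rewrite hankel_eq addrAC subrr add0r.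
Qed.

Theorem mainTheorem1 (r : nat) (r_ge1 : (1 <= r)%N)
    (R : nat -> int -> Qfield r) (HR : is_Qsystem R) :
  (forall (alpha : nat) (n : int), (1 <= alpha <= r.+1)%N ->
    R alpha n =
      \det (\matrix_(i < alpha, j < alpha)
              R 1%N (n + (i.+1 + j.+1)%N%:Z - 1 - alpha%:Z)))
  /\
  (forall n : int,
    \det (\matrix_(i < r.+1, j < r.+1)
            R 1%N (n + (i.+1 + j.+1)%N%:Z - r%:Z - 2)) = 1).
Proof.
split=> [alpha n /andP [_ alpha_le] | n]; first exact: qsystem_hankel.
have -> : \det (\matrix_(i < r.+1, j < r.+1) R 1%N (n + (i.+1 + j.+1)%N%:Z - r%:Z - 2))
    = hankel (R 1%N) r.+1 n.
  by congr (\det _); apply/matrixP => i j; rewrite !mxE; congr R; lia.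
have [_ _ boundary _ _] := HR.
by rewrite -qsystem_hankel // (boundary n).2.
Qed.
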